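(* Let $n'\in\mathbb{N}$, $g\in\mathbb{N}$, and let $\phi:\mathbb{N}\to\mathbb{N}^{n'}$ be a monotonic map. Then $\phi$ changes the Stanley depth by $1-n'$ with respect to $g$ and $g':=\phi(g)$.
   Context: $\mathbb{N}^n$ carries the componentwise partial order; $[a,b]=\{c: a\le c\le b\}$; a map is monotonic if it preserves this order. A monotonic map $\phi:\mathbb{N}^n\to\mathbb{N}^{n'}$ changes the Stanley depth by $\ell\in\mathbb{Z}$ with respect to $g\in\mathbb{N}^n$ and $g'\in\mathbb{N}^{n'}$ if (1) $\phi(g)\le g'$, and (2) for every interval $[a',b']\subset[0,g']$, the set $\phi^{-1}([a',b'])\cap[0,g]$ is a finite disjoint union $\bigcup_i[a^i,b^i]$ of intervals with $\#\{j\in[n]: b^i_j=g_j\}\ge\#\{j\in[n']: b'_j=g'_j\}+\ell$ for all $i$. *)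

From Stdlib Require Import List.
From mathcomp Require Import all_boot all_order all_algebra.
Set Implicit Arguments. Unset Strict Implicit. Unset Printing Implicit Defensive.
Import GRing.Theory Num.Theory.

Definition vec (n : nat) := 'I_n -> nat.

Definition vle (n : nat) (a b : vec n) : Prop := forall i, a i <= b i.

Definition in_interval (n : nat) (a b c : vec n) : Prop := vle a c /\ vle c b.

Definition monotonic (n n' : nat) (phi : vec n -> vec n') : Prop :=
  forall a b, vle a b -> vle (phi a) (phi b).

Definition ntop (n : nat) (b g : vec n) : nat := #|[set j : 'I_n | b j == g j]|.

Definition changes_sdepth (n n' : nat) (phi : vec n -> vec n')
    (g : vec n) (g' : vec n') (l : int) : Prop :=
  vle (phi g) g' /\
  forall a' b' : vec n',
    (forall c, in_interval a' b' c -> in_interval (fun _ => 0) g' c) ->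
    exists s : seq (vec n * vec n),
      (forall p, List.In p s -> vle p.1 p.2) /\
      (* the union of the pieces is phi^-1([a',b']) \cap [0,g] *)
      (forall c, (in_interval a' b' (phi c) /\ in_interval (fun _ => 0) g c) <->
                 exists2 p, List.In p s & in_interval p.1 p.2 c) /\
      (forall i j, (i < size s)%N -> (j < size s)%N -> i <> j ->
         forall c, ~ (in_interval (List.nth i s (g, g)).1 (List.nth i s (g, g)).2 c /\
                      in_interval (List.nth j s (g, g)).1 (List.nth j s (g, g)).2 c)) /\
      (forall p, List.In p s -> ((ntop p.2 g)%:Z >= (ntop b' g')%:Z + l)%R).

Definition of_vec1 (a : vec 1) : nat := a ord0.
Definition to_vec1 (x : nat) : vec 1 := fun _ => x.

(** The preimage [phi^-1([a',b'])] of an interval under a monotonic map on [N]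
    is again an interval, so its intersection with [[0,g]] is empty or a single
    piece [[lo,hi]].  If [hi = g] the piece has one top coordinate, and
    [ntop b' g' <= n'] suffices.  If [hi < g], then [phi (hi+1)] lies above [a']
    but outside [[a',b']], so some coordinate [j] has
    [b'_j < phi(hi+1)_j <= g'_j]; hence [ntop b' g' <= n' - 1] and the piece,
    with no top coordinate, still satisfies the bound. *)

From mathcomp Require Import all_boot all_order all_algebra.
From mathcomp Require Import zify.
Set Implicit Arguments.

Definition vleb (n : nat) (a b : vec n) : bool := [forall i, a i <= b i].

Lemma vleP (n : nat) (a b : vec n) : reflect (vle a b) (vleb a b).
Proof. exact: forallP. Qed.

Lemma in_intervalP (n : nat) (a b c : vec n) :
  reflect (in_interval a b c) (vleb a c && vleb c b).
Proof. by apply: (iffP andP) => -[/vleP ? /vleP ?]; split=> //; apply/vleP. Qed.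

Lemma vle1 (a b : vec 1) : vle a b <-> a ord0 <= b ord0.
Proof. by split=> [|le_ab i]; [apply | rewrite (ord1 i)]. Qed.

Lemma in_interval1 (a b c : vec 1) :
  in_interval a b c <-> a ord0 <= c ord0 <= b ord0.
Proof. rewrite /in_interval !vle1; exact: (rwP andP). Qed.

Lemma ntop_le (n : nat) (b g : vec n) : ntop b g <= n.
Proof. by rewrite -[X in _ <= X]card_ord max_card. Qed.

Lemma ntop_lt (n : nat) (b g : vec n) (j : 'I_n) : b j != g j -> ntop b g < n.
Proof.
move=> neq_bg; rewrite /ntop -[X in _ < X]card_ord -cardsT proper_card //.
rewrite properT; apply/negP => /eqP full.
by move: (in_setT j); rewrite -full inE (negbTE neq_bg).
Qed.

Lemma ntop_vec1 (x y : nat) : ntop (to_vec1 x) (to_vec1 y) = (x == y).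
Proof.
by rewrite /ntop /to_vec1 /=; case: (x == y); rewrite ?cardsT ?card_ord ?cards0.
Qed.

Lemma ntop_lt_of_escape (n : nat) (a b c g : vec n) :
  vle a c -> ~ in_interval a b c -> vle c g -> ntop b g < n.
Proof.
move=> le_ac out_c le_cg.
have /existsP [j lt_bc] : [exists j, ~~ (c j <= b j)].
  by rewrite -negb_forall; apply/negP => /vleP le_cb; apply: out_c.
by apply: (@ntop_lt _ _ _ j); apply: contra lt_bc => /eqP ->.
Qed.

Lemma nat_segment (P : pred nat) (g : nat) :
  (exists2 x, x <= g & P x) ->
  (forall x y z, x <= y <= z -> P x -> P z -> P y) ->
  exists lo hi, [/\ lo <= hi, hi <= g & forall c, c <= g -> P c = (lo <= c <= hi)].
Proof.
move=> [x le_xg Px] convexP.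
have exP : exists x, P x && (x <= g) by exists x; rewrite Px.
have [lo /andP [Plo _] min_lo] := ex_minnP exP.
have [hi /andP [Phi le_hig] max_hi] := ex_maxnP exP (fun y => @proj2 _ _ \o andP).
exists lo, hi; split=> [||c le_cg] //; first by rewrite min_lo ?Phi.
apply/idP/idP => [Pc | bounds_c]; first by rewrite min_lo ?max_hi ?Pc.
exact: convexP bounds_c Plo Phi.
Qed.

Lemma monotone_preimage_convex (n : nat) (phi : nat -> vec n) (a b : vec n) :
  (forall x y, x <= y -> vle (phi x) (phi y)) ->
  forall x y z, x <= y <= z -> in_interval a b (phi x) -> in_interval a b (phi z) ->
  in_interval a b (phi y).
Proof.
move=> phi_mono x y z /andP [le_xy le_yz] [le_ax _] [_ le_zb]; split=> i.
  by apply: leq_trans (le_ax i) _; apply: phi_mono.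
by apply: leq_trans (le_zb i); apply: phi_mono.
Qed.

Lemma monotone_preimage_segment (n : nat) (phi : nat -> vec n) (a b : vec n) (g : nat) :
  (forall x y, x <= y -> vle (phi x) (phi y)) ->
  (forall c, c <= g -> ~ in_interval a b (phi c)) \/
  exists lo hi, [/\ lo <= hi, hi <= g &
    forall c, c <= g -> in_interval a b (phi c) <-> lo <= c <= hi].
Proof.
move=> phi_mono; pose P x := vleb a (phi x) && vleb (phi x) b.
have [nonempty | empty] := boolP [exists x : 'I_g.+1, P x]; [right | left]; last first.
  move=> c le_cg /in_intervalP Pc; move/existsPn: empty.
  by move=> /(_ (Ordinal (le_cg : c < g.+1))); rewrite /P Pc.
have [lo [hi [le_lohi le_hig segP]]] :
    exists lo hi, [/\ lo <= hi, hi <= g & forall c, c <= g -> P c = (lo <= c <= hi)].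
  apply: nat_segment => [|x y z bounds /in_intervalP Px /in_intervalP Pz].
    by case/existsP: nonempty => x Px; exists x; first rewrite -ltnS.
  by apply/in_intervalP; apply: monotone_preimage_convex phi_mono _ _ _ bounds Px Pz.
by exists lo, hi; split=> // c le_cg; rewrite -segP //; exact: rwP (in_intervalP _ _ _).
Qed.

Lemma ntop_lt_of_segment_end (n : nat) (phi : nat -> vec n) (a b : vec n) (g hi : nat) :
  (forall x y, x <= y -> vle (phi x) (phi y)) ->
  hi < g -> in_interval a b (phi hi) -> ~ in_interval a b (phi hi.+1) ->
  ntop b (phi g) < n.
Proof.
move=> phi_mono lt_hig [le_a _] out_next.
apply: (ntop_lt_of_escape (a := a) _ out_next); last exact: phi_mono.
by move=> i; apply: leq_trans (le_a i) (phi_mono _ _ (leqnSn hi) i).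
Qed.

Lemma in_singleton_intervals (n : nat) (q : vec n * vec n) (c : vec n) :
  (exists2 p, List.In p [:: q] & in_interval p.1 p.2 c) <-> in_interval q.1 q.2 c.
Proof. by split=> [[p [<-|[]]] | in_q] //; exists q; first left. Qed.

Theorem lemma3p6 (n' : nat) (g : nat) (phi : nat -> vec n')
  (hmono : forall x y : nat, x <= y -> vle (phi x) (phi y)) :
  changes_sdepth (fun a : vec 1 => phi (of_vec1 a)) (to_vec1 g) (phi g)
    (1 - (n'%:Z))%R.
Proof.
split=> // a' b' _.
have in_piece c : in_interval a' b' (phi (of_vec1 c)) /\ in_interval (fun=> 0) (to_vec1 g) c
                  <-> in_interval a' b' (phi (c ord0)) /\ c ord0 <= g.
  by rewrite in_interval1.
have [empty | [lo [hi [le_lohi le_hig segP]]]] := @monotone_preimage_segment _ phi a' b' g hmono.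
  exists [::]; split=> //; split=> // c; rewrite in_piece.
  by split=> [[in_c /empty /(_ in_c)] | []].
exists [:: (to_vec1 lo, to_vec1 hi)]; split; [|split; [|split]].
- by move=> p [<-|[]] //; apply/vle1.
- move=> c; rewrite in_piece in_singleton_intervals in_interval1 /=.
  split=> [[/segP in_c le_cg] | bounds]; first exact: in_c.
  have le_cg : c ord0 <= g by case/andP: bounds => _ /leq_trans->.
  by split=> //; apply/segP.
- by move=> [|?] [|?] // _ _ /(_ erefl).
- move=> p [<-|[]] //=; rewrite ntop_vec1.
  have [_|neq_hig] := eqVneq hi g; first by have := ntop_le b' (phi g); lia.
  have lt_hig : hi < g by rewrite ltn_neqAle neq_hig.
  suff : ntop b' (phi g) < n' by lia.
  apply: (@ntop_lt_of_segment_end _ phi a' b' g hi hmono lt_hig).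
    by apply/segP; rewrite ?le_lohi ?leqnn.
  by move/segP => /(_ lt_hig); rewrite ltnn andbF.
Qed.
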